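(* Let $A\in\mathbb{R}^{n\times n}$ have all eigenvalues in the open unit disk and let $B\in\mathbb{R}^{n\times m}$. Let $N\geq n+m$ and for $i=1,\dots,N$ let $x_{i,1},x_{i,2}\in\mathbb{R}^{n}$, $u_{i,1}\in\mathbb{R}^{m}$ satisfy $x_{i,2}=Ax_{i,1}+Bu_{i,1}$. Put $X_{N,1}:=(x_{1,1},\dots,x_{N,1})^{\top}$, $X_{N,2}:=(x_{1,2},\dots,x_{N,2})^{\top}$ (in $\mathbb{R}^{N\times n}$), $U_{N,1}:=(u_{1,1},\dots,u_{N,1})^{\top}\in\mathbb{R}^{N\times m}$. Let $(Z_{N,2},Z_{B_{N,1}})\in\mathbb{R}^{N\times n}\times\mathbb{R}^{m\times N}$ be a solution of $X_{N,2}X_{N,1}^{\top}=X_{N,1}Z_{N,2}^{\top}+U_{N,1}Z_{B_{N,1}}$, and let $U_{B_{N,1}}\in\mathbb{R}^{N\times n}$ be a solution of $X_{N,1}U_{B_{N,1}}^{\top}=X_{N,1}X_{N,2}^{\top}-Z_{N,2}X_{N,1}^{\top}$. Let $\hat{A}\in\mathbb{R}^{r\times r}$, $\hat{B}\in\mathbb{R}^{r\times m}$, $\hat{C}\in\mathbb{R}^{n\times r}$, and assume: (a1) $(X_{N,1}^{\dagger}Z_{N,2},X_{N,1}^{\dagger}X_{N,1})$ is a regular matrix pencil; (a2) the spectra of $(X_{N,1}^{\dagger}Z_{N,2},X_{N,1}^{\dagger}X_{N,1})$ and $(I_r,\hat{A})$ are disjoint; (a3) $(X_{N,1}^{\dagger}(X_{N,2}-U_{B_{N,1}}),X_{N,1}^{\dagger}X_{N,1})$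 is a regular matrix pencil; (a4) the spectra of $(X_{N,1}^{\dagger}(X_{N,2}-U_{B_{N,1}}),X_{N,1}^{\dagger}X_{N,1})$ and $(I_r,\hat{A})$ are disjoint; (A2) every eigenvalue $\lambda$ of $\hat{A}$ satisfies $0<|\lambda|<1$; (b1) $\operatorname{rank}\begin{pmatrix}X_{N,1}&U_{N,1}\end{pmatrix}=n+m$; (b2) $\operatorname{rank}X_{N,1}=n$; (b3) $\operatorname{rank}U_{N,1}=m$. Let $P\in\mathbb{R}^{r\times r}$, $Q\in\mathbb{R}^{r\times r}$ be the solutions of $\hat{A}P\hat{A}^{\top}+\hat{B}\hat{B}^{\top}=P$ and $\hat{A}^{\top}Q\hat{A}+\hat{C}^{\top}\hat{C}=Q$. Let $R,S\in\mathbb{R}^{n\times r}$ satisfy $$X_{N,1}^{\dagger}Z_{N,2}R\hat{A}^{\top}+X_{N,1}^{\dagger}Z_{B_{N,1}}^{\top}\hat{B}^{\top}=X_{N,1}^{\dagger}X_{N,1}R,\qquad X_{N,1}^{\dagger}(X_{N,2}-U_{B_{N,1}})S\hat{A}-X_{N,1}^{\dagger}X_{N,1}\hat{C}=X_{N,1}^{\dagger}X_{N,1}S,$$ and let $S_B\in\mathbb{R}^{m\times r}$ satisfy $U_{N,1}S_{B}=U_{B_{N,1}}S$. Define $$\tilde{\nabla}_{\hat{A}}f:=2\big(Q\hat{A}P+(S^{\top}R-S_{B}^{\top}\hat{B}^{\top})(\hat{A}^{\dagger})^{\top}\big),\quad \tilde{\nabla}_{\hat{B}}f:=2(S_{B}^{\top}+Q\hat{B}),\quad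 \tilde{\nabla}_{\hat{C}}f:=2(\hat{C}P-R).$$ Let $R_*,S_*\in\mathbb{R}^{n\times r}$ be the solutions of $AR_*\hat{A}^{\top}+B\hat{B}^{\top}=R_*$ and $A^{\top}S_*\hat{A}-\hat{C}=S_*$. Then $$\tilde{\nabla}_{\hat{A}}f=\nabla_{\hat{A}}f=2(Q\hat{A}P+S_*^{\top}AR_* ),\quad \tilde{\nabla}_{\hat{B}}f=\nabla_{\hat{B}}f=2(S_*^{\top}B+Q\hat{B}),\quad \tilde{\nabla}_{\hat{C}}f=\nabla_{\hat{C}}f=2(\hat{C}P-R_* ).$$
   Context: $M^{\dagger}$ denotes the Moore–Penrose pseudoinverse. A pair $(M,K)$ of square matrices of equal size is a regular matrix pencil if $\det(M-\lambda K)$ is not identically zero in $\lambda$; its spectrum is the set of $\lambda\in\mathbb{C}$ with $\det(M-\lambda K)=0$, together with $\infty$ if $K$ is singular. The spectrum of $(I_r,\hat A)$ is the set of $\lambda\in\mathbb{C}$ with $\det(I_r-\lambda\hat A)=0$ (plus $\infty$ if $\hat A$ is singular). Background: for the system $x_{k+1}=Ax_k+Bu_k$, $y_k=x_k$ with transfer function $H(z)=(zI_n-A)^{-1}B$ and a reduced model with $H_r(z)=\hat{C}(zI_r-\hat{A})^{-1}\hat{B}$, $\hat A$ stable, one has $\|H-H_r\|_{h^2}^2=\operatorname{tr}(\Sigma_c)+f(\hat A,\hat B,\hat C)$ where $A\Sigma_cA^\top+BB^\top=\Sigma_c$ and $f(\hat{A},\hat{B},\hat{C})=\operatorname{tr}(\hat{C}P\hat{C}^{\top})-2\operatorname{tr}(R_*\hat{C}^{\top})$;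 by known results (Van Dooren et al.; Bunse-Gerstner et al.) the entrywise partial-derivative gradients $\nabla_{\hat A}f,\nabla_{\hat B}f,\nabla_{\hat C}f$ of $f$ are given by the formulas $2(Q\hat{A}P+S_*^{\top}AR_* )$, $2(S_*^{\top}B+Q\hat{B})$, $2(\hat{C}P-R_* )$. *)

From HB Require Import structures.
From mathcomp Require Import all_boot all_order all_algebra.
From mathcomp Require Import complex.
From Stdlib Require Import ClassicalEpsilon.
Set Implicit Arguments. Unset Strict Implicit. Unset Printing Implicit Defensive.
Import Order.TTheory GRing.Theory Num.Theory.
Local Open Scope ring_scope.

Section Defs.
Variable R : rcfType.

Definition cmx (p q : nat) (M : 'M[R]_(p, q)) : 'M[R[i]]_(p, q) :=
  map_mx (fun x => (x%:C)%C) M.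

(* Moore-Penrose pseudoinverse: the (unique) matrix satisfying the four
   Penrose conditions (it always exists over the reals). *)
Definition penrose (p q : nat) (M : 'M[R]_(p, q)) (X : 'M[R]_(q, p)) : Prop :=
  [/\ M *m X *m M = M, X *m M *m X = X,
      (M *m X)^T = M *m X & (X *m M)^T = X *m M].

Definition pinv (p q : nat) (M : 'M[R]_(p, q)) : 'M[R]_(q, p) :=
  match excluded_middle_informative (exists X, penrose M X) with
  | left H => proj1_sig (constructive_indefinite_description _ H)
  | right _ => 0
  end.

Definition regular_pencil (k : nat) (M K : 'M[R]_k) : Prop :=
  \det (map_mx polyC M - 'X *: map_mx polyC K) != 0.

(* spectrum of the pencil (M,K); None stands for the point infinity *)
Definition pencil_spec (k : nat) (M K : 'M[R]_k) (z : option R[i]) : Prop :=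
  match z with
  | Some l => \det (cmx M - l *: cmx K) = 0
  | None => \det K = 0
  end.

Definition spec_disjoint (k l : nat) (M1 K1 : 'M[R]_k) (M2 K2 : 'M[R]_l) : Prop :=
  forall z, ~ (pencil_spec M1 K1 z /\ pencil_spec M2 K2 z).

End Defs.

From HB Require Import structures.
From mathcomp Require Import all_boot all_order all_algebra.
From mathcomp Require Import complex.
From Stdlib Require Import ClassicalEpsilon.
Import Order.TTheory GRing.Theory Num.Theory.
Set Implicit Arguments.
Unset Strict Implicit.
Unset Printing Implicit Defensive.
Local Open Scope ring_scope.

(* Since x_{i,2} = A x_{i,1} + B u_{i,1}, the data matrices satisfy
   X2 = X1 A^T + U1 B^T.  Full column rank of [X1 U1], X1 and U1 then forces
   Z2 = X1 A, ZB = B^T X1^T, UB = U1 B^T and S_B = B^T S, while the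
   pseudoinverse of X1, which is (X1^T X1)^-1 X1^T, is a left inverse.
   Hence the two pencil equations become the Stein equations
   A R Ah^T + B Bh^T = R and A^T S Ah - Ch = S defining R_* and S_*.
   These have unique solutions: if A D M = D then p(A) D M^k = D q(M),
   where p = prod (X - l) is the characteristic polynomial of A, so
   p(A) = 0, and q(M) = prod (1 - l M) is invertible when the spectra of A
   and (I, M) are disjoint.  Finally Ah is invertible by (A2), so its
   pseudoinverse is its inverse and S^T R - S_B^T Bh^T = S_*^T A R_* Ah^T. *)

Lemma eigenvalue_det (F : fieldType) n (A : 'M[F]_n) a :
  eigenvalue A a -> \det (A - a%:M) = 0.
Proof.
case/eigenvalueP=> v vA v_neq0; apply/eqP/det0P; exists v => //.
by rewrite mulmxBr vA mul_mx_scalar subrr.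
Qed.

Lemma stein_prod_factor (F : fieldType) n r (A : 'M[F]_n) (M : 'M[F]_r)
    (D : 'M[F]_(n, r)) (s : seq F) :
  A *m D *m M = D ->
  (\prod_(l <- s) (A - l%:M)) *m D *m M ^+ size s
    = D *m \prod_(l <- s) (1%:M - l *: M).
Proof.
elim: s D => [|l s IHs] D ADM; first by rewrite !big_nil expr0 mul1mx mulmx1.
have ADM_M : A *m (D *m M) *m M = D *m M by rewrite mulmxA ADM.
have mulE p (X Y : 'M[F]_p) : X * Y = X *m Y by [].
rewrite !big_cons /= exprS !mulE -!mulmxA (mulmxA D M) (mulmxA _ (D *m M)).
rewrite IHs // !mulmxA !mulmxBl ADM mul_scalar_mx -scalemxAl.
by rewrite mulmxBr mulmx1 -scalemxAr mulmxBl.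
Qed.

Lemma stein_eq0 (F : closedFieldType) n r (A : 'M[F]_n) (M : 'M[F]_r)
    (D : 'M[F]_(n, r)) :
  (forall l, eigenvalue A l -> \det (1%:M - l *: M) != 0) ->
  A *m D *m M = D -> D = 0.
Proof.
case: n A D => [|n] A D AM_reg ADM; first by rewrite flatmx0.
have [s charA] := closed_field_poly_normal (char_poly A).
rewrite (monicP (char_poly_monic A)) scale1r in charA.
have charA0 : \prod_(l <- s) (A - l%:M) = 0.
  rewrite -(Cayley_Hamilton A) charA rmorph_prod; apply: eq_bigr => l _.
  by rewrite rmorphB /= horner_mx_X horner_mx_C.
have Mprod_unit : \prod_(l <- s) (1%:M - l *: M) \in unitmx.
  rewrite unitmxE unitfE (big_morph _ (@det_mulmx _ _) (det1 _ _)).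
  rewrite prodf_seq_neq0; apply/allP => l sl; apply: AM_reg.
  by rewrite eigenvalue_root_char charA root_prod_XsubC.
have := stein_prod_factor s ADM; rewrite charA0 !mul0mx => /esym D_prod0.
by rewrite -[D]mulmx1 -(mulmxV Mprod_unit) mulmxA D_prod0 mul0mx.
Qed.

Lemma full_col_rank_inj (F : fieldType) p q k (X : 'M[F]_(p, q)) :
  \rank X = q -> injective (@mulmx _ p q k X).
Proof.
move=> rkX Y Y' XY; apply: trmx_inj; apply: (@row_free_inj _ _ _ _ X^T).
  by rewrite /row_free mxrank_tr rkX.
by rewrite -!trmx_mul XY.
Qed.

Lemma gram_unitmx (R : realFieldType) p q (X : 'M[R]_(p, q)) :
  \rank X = q -> X^T *m X \in unitmx.
Proof.
move=> rkX; rewrite unitmxE unitfE; apply/det0P => -[v v_neq0 vG0].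
set w := v *m X^T.
have /psumr_eq0P w_sq0 : \sum_j w 0 j ^+ 2 = 0.
  have -> : \sum_j w 0 j ^+ 2 = (w *m w^T) 0 0.
    by rewrite mxE; apply: eq_bigr => j _; rewrite [w^T j 0]mxE expr2.
  by rewrite trmx_mul trmxK mulmxA -(mulmxA v) vG0 !mul0mx mxE.
have w0 : w = 0.
  apply/rowP => j; rewrite [RHS]mxE; apply/eqP.
  by rewrite -sqrf_eq0 w_sq0 // => i _; exact: sqr_ge0.
move/eqP: v_neq0; apply; apply: trmx_inj; apply: (full_col_rank_inj rkX).
by rewrite trmx0 mulmx0 -(trmxK X) -trmx_mul -/w w0 trmx0.
Qed.

Section PseudoInverse.
Variable R : rcfType.

Lemma pinvP p q (X : 'M[R]_(p, q)) :
  (exists Y, penrose X Y) -> penrose X (pinv X).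
Proof.
rewrite /pinv => exY; case: excluded_middle_informative => [? | /(_ exY)//].
by case: constructive_indefinite_description.
Qed.

Lemma penrose_full_col_rank p q (X : 'M[R]_(p, q)) :
  \rank X = q -> penrose X (invmx (X^T *m X) *m X^T).
Proof.
move=> rkX; have YX1 : invmx (X^T *m X) *m X^T *m X = 1%:M.
  by rewrite -mulmxA mulVmx // gram_unitmx.
split; first by rewrite -mulmxA YX1 mulmx1.
- by rewrite YX1 mul1mx.
- by rewrite !trmx_mul trmxK trmx_inv trmx_mul trmxK mulmxA.
- by rewrite YX1 trmx1.
Qed.

Lemma penrose_full_col_mulmx p q (X : 'M[R]_(p, q)) Y :
  \rank X = q -> penrose X Y -> Y *m X = 1%:M.
Proof.
move=> rkX [XYX _ _ _]; apply: (full_col_rank_inj rkX).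
by rewrite mulmxA XYX mulmx1.
Qed.

Lemma pinv_full_col_mulmx p q (X : 'M[R]_(p, q)) :
  \rank X = q -> pinv X *m X = 1%:M.
Proof.
move=> rkX; apply: (penrose_full_col_mulmx rkX); apply: pinvP.
by exists (invmx (X^T *m X) *m X^T); exact: penrose_full_col_rank.
Qed.

Lemma pinv_unitmx n (X : 'M[R]_n) : X \in unitmx -> pinv X = invmx X.
Proof.
move=> Xu; rewrite -[pinv X]mulmx1 -(mulmxV Xu) mulmxA.
by rewrite pinv_full_col_mulmx ?mul1mx // mxrank_unit.
Qed.

End PseudoInverse.

Section Complexification.
Variable R : rcfType.

Lemma cmxE p q (M : 'M[R]_(p, q)) : cmx M = map_mx (real_complex R) M.
Proof. by []. Qed.

Lemma pencil_spec_tr k (M K : 'M[R]_k) z :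
  pencil_spec M^T K^T z = pencil_spec M K z.
Proof.
case: z => [l|] /=; last by rewrite det_tr.
by rewrite !cmxE -!map_trmx -det_tr linearB linearZ /= !trmxK.
Qed.

Lemma spec_disjoint_tr k l (M1 K1 : 'M[R]_k) (M2 K2 : 'M[R]_l) :
  spec_disjoint M1 K1 M2 K2 -> spec_disjoint M1 K1 M2^T K2^T.
Proof. by move=> dis z; rewrite pencil_spec_tr; exact: dis. Qed.

Lemma stein_real_eq0 n r (A : 'M[R]_n) (M : 'M[R]_r) (D : 'M[R]_(n, r)) :
  spec_disjoint A 1%:M 1%:M M -> A *m D *m M = D -> D = 0.
Proof.
move=> dis ADM; apply: (@map_mx_inj _ _ (real_complex R)); rewrite map_mx0.
apply: (@stein_eq0 _ _ _ (cmx A) (cmx M)); last by rewrite -!map_mxM ADM.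
move=> l /eigenvalue_det Al0; apply/eqP => Ml0.
by apply: (dis (Some l)); rewrite /= !cmxE !map_mx1 scalemx1.
Qed.

Lemma stein_uniq n r (A : 'M[R]_n) (M : 'M[R]_r) (E D1 D2 : 'M[R]_(n, r)) :
  spec_disjoint A 1%:M 1%:M M ->
  A *m D1 *m M + E = D1 -> A *m D2 *m M + E = D2 -> D1 = D2.
Proof.
move=> dis D1E D2E; apply/eqP; rewrite -subr_eq0; apply/eqP.
apply: (stein_real_eq0 dis); rewrite mulmxBr mulmxBl.
by rewrite -[X in _ = X - _]D1E -[X in _ = _ - X]D2E opprD addrACA subrr addr0.
Qed.

Lemma unitmx_cmx k (M : 'M[R]_k) : ~~ eigenvalue (cmx M) 0 -> M \in unitmx.
Proof.
apply: contraR; rewrite unitmxE unitfE negbK => /eqP detM0.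
rewrite eigenvalue_root_char /root horner_coef0 char_poly_det.
by rewrite cmxE det_map_mx detM0 rmorph0 mulr0.
Qed.

End Complexification.

Theorem theorem1 (R : rcfType) (n m r N : nat)
  (A : 'M[R]_n) (B : 'M[R]_(n, m))
  (HA : forall l : R[i], eigenvalue (cmx A) l -> `|l| < 1)
  (HN : (n + m <= N)%N)
  (x1 x2 : 'I_N -> 'cV[R]_n) (u1 : 'I_N -> 'cV[R]_m)
  (Hx : forall i, x2 i = A *m x1 i + B *m u1 i)
  (Z2 : 'M[R]_(N, n)) (ZB : 'M[R]_(m, N)) (UB : 'M[R]_(N, n))
  (Ah : 'M[R]_r) (Bh : 'M[R]_(r, m)) (Ch : 'M[R]_(n, r))
  (P Q : 'M[R]_r) (Rm Sm : 'M[R]_(n, r)) (SB : 'M[R]_(m, r))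
  (Rs Ss : 'M[R]_(n, r)) :
  let X1 : 'M[R]_(N, n) := \matrix_(i < N) (x1 i)^T in
  let X2 : 'M[R]_(N, n) := \matrix_(i < N) (x2 i)^T in
  let U1 : 'M[R]_(N, m) := \matrix_(i < N) (u1 i)^T in
  let Xp := pinv X1 in
  X2 *m X1^T = X1 *m Z2^T + U1 *m ZB ->
  X1 *m UB^T = X1 *m X2^T - Z2 *m X1^T ->
  (* (a1)-(a4) *)
  regular_pencil (Xp *m Z2) (Xp *m X1) ->
  spec_disjoint (Xp *m Z2) (Xp *m X1) 1%:M Ah ->
  regular_pencil (Xp *m (X2 - UB)) (Xp *m X1) ->
  spec_disjoint (Xp *m (X2 - UB)) (Xp *m X1) 1%:M Ah ->
  (* (A2) *)
  (forall l : R[i], eigenvalue (cmx Ah) l -> 0 < `|l| < 1) ->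
  (* (b1)-(b3) *)
  \rank (row_mx X1 U1) = (n + m)%N ->
  \rank X1 = n ->
  \rank U1 = m ->
  Ah *m P *m Ah^T + Bh *m Bh^T = P ->
  Ah^T *m Q *m Ah + Ch^T *m Ch = Q ->
  Xp *m Z2 *m Rm *m Ah^T + Xp *m ZB^T *m Bh^T = Xp *m X1 *m Rm ->
  Xp *m (X2 - UB) *m Sm *m Ah - Xp *m X1 *m Ch = Xp *m X1 *m Sm ->
  U1 *m SB = UB *m Sm ->
  A *m Rs *m Ah^T + B *m Bh^T = Rs ->
  A^T *m Ss *m Ah - Ch = Ss ->
  [/\ 2%:R *: (Q *m Ah *m P + (Sm^T *m Rm - SB^T *m Bh^T) *m (pinv Ah)^T)
        = 2%:R *: (Q *m Ah *m P + Ss^T *m A *m Rs),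
      2%:R *: (SB^T + Q *m Bh) = 2%:R *: (Ss^T *m B + Q *m Bh)
    & 2%:R *: (Ch *m P - Rm) = 2%:R *: (Ch *m P - Rs)].
Proof.
(* (a1), (a3) and the equations for P and Q only serve to make R, S, P, Q
   exist in the paper; here they are given. *)
move=> X1 X2 U1 Xp XZ UBE _ disZ _ disUB Ah_eig rkXU rkX rkU _ _.
move=> RE SE SBE RsE SsE.
have X2E : X2 = X1 *m A^T + U1 *m B^T.
  apply/row_matrixP => i.
  by rewrite linearD /= !row_mul !rowK Hx linearD /= !trmx_mul.
have XpX1 : Xp *m X1 = 1%:M := pinv_full_col_mulmx rkX.
have [Z2E ZBE] : Z2^T = A^T *m X1^T /\ ZB = B^T *m X1^T.
  apply: eq_col_mx; apply: (full_col_rank_inj rkXU).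
  by rewrite !mul_row_col -XZ X2E mulmxDl !mulmxA.
have {}Z2E : Z2 = X1 *m A by rewrite -[Z2]trmxK Z2E trmx_mul !trmxK.
have {}UBE : UB = U1 *m B^T.
  apply: trmx_inj; apply: (full_col_rank_inj rkX).
  rewrite UBE X2E Z2E linearD /= !trmx_mul !trmxK mulmxDr !mulmxA.
  by rewrite addrC addKr.
have {}SBE : SB = B^T *m Sm.
  by apply: (full_col_rank_inj rkU); rewrite SBE UBE mulmxA.
have X2UB : X2 - UB = X1 *m A^T by rewrite X2E UBE addrK.
rewrite Z2E ZBE X2UB !trmx_mul !trmxK !mulmxA XpX1 !mul1mx in RE SE disZ disUB.
have <- : Rm = Rs.
  move: (spec_disjoint_tr disZ); rewrite trmx1 => /stein_uniq.
  by apply; [exact: RE | exact: RsE].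
have <- : Sm = Ss by apply: (stein_uniq disUB SE SsE).
have Ah_unit : Ah \in unitmx.
  by apply: unitmx_cmx; apply/negP => /Ah_eig; rewrite normr0 ltxx.
rewrite SBE pinv_unitmx // trmx_mul trmxK; split => //.
rewrite -(mulmxA Sm^T B) -mulmxBr -[X in _ *m (X - _)]RE addrK.
by rewrite -!mulmxA -trmx_mul mulVmx // trmx1 mulmx1.
Qed.
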